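(* Let $T$ be a correlation-free parity decision tree on $\{-1,1\}^n$ of depth $d$. Then $\mathbf{E}_{\ell\in T}\big(\sum_{i=1}^n \ell_i\big)^2\le d$.
   Context: A parity decision tree on $\{-1,1\}^n$ is a rooted full binary tree whose internal nodes are labelled by subsets $S\subseteq[n]$, whose two outgoing edges are labelled $-1$ and $1$; an input $x$ follows from a node labelled $S$ the edge labelled $\prod_{i\in S}x_i$. Depth is the maximum number of internal nodes on a root-to-leaf path. A quantity (such as $x_i$ or $x_i\oplus x_j$) is fixed by the queries on a path if it is determined by the answers to the parities queried along that path. $T$ is (pairwise) correlation-free if for every $i\ne j\in[n]$ and every path in $T$, whenever $x_i\oplus x_j$ is fixed by the queries in the path, so are $x_i$ and $x_j$. Each leaf is represented as a vector $\ell\in\{-1,0,1\}^n$ with $\ell_i$ the expected value of $x_i$ over uniformly random inputs reaching that leaf; $\mathbf{E}_{\ell\in T}$ is the expectation over the leaf reached by a uniformly random input. *)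

From HB Require Import structures.
From mathcomp Require Import all_boot all_order all_algebra.
Set Implicit Arguments. Unset Strict Implicit. Unset Printing Implicit Defensive.
Import Order.TTheory GRing.Theory Num.Theory.
Local Open Scope ring_scope.

(* Inputs x in {-1,1}^n are encoded as boolean vectors: x_i = sgn (x i),
   where true encodes -1 and false encodes 1. *)
Definition input (n : nat) := {ffun 'I_n -> bool}.

Definition sgn (b : bool) : rat := if b then -1 else 1.

Definition parity n (S : {set 'I_n}) (x : input n) : rat :=
  \prod_(i in S) sgn (x i).

(* Parity decision trees: an internal node is labelled by S and has a child
   along the edge labelled -1 (first) and one along the edge labelled 1. *)
Inductive pdt (n : nat) : Type :=
| Leaf : pdt n
| Node : {set 'I_n} -> pdt n -> pdt n -> pdt n.

Fixpoint depth n (T : pdt n) : nat :=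
  match T with
  | Leaf => 0
  | Node _ tm tp => (maxn (depth tm) (depth tp)).+1
  end.

(* A path from the root is a sequence of edge labels; true = edge -1,
   false = edge 1. *)
Definition child n (b : bool) (tm tp : pdt n) := if b then tm else tp.

Fixpoint valid_path n (T : pdt n) (p : seq bool) : bool :=
  match T, p with
  | _, [::] => true
  | Node _ tm tp, b :: p' => valid_path (child b tm tp) p'
  | Leaf, _ :: _ => false
  end.

Fixpoint path_queries n (T : pdt n) (p : seq bool) : seq {set 'I_n} :=
  match T, p with
  | Node Sq tm tp, b :: p' => Sq :: path_queries (child b tm tp) p'
  | _, _ => [::]
  end.

Definition fixed n (Q : seq {set 'I_n}) (f : input n -> bool) : Prop :=
  forall x y : input n, (forall S, S \in Q -> parity S x = parity S y) ->
    f x = f y.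

Definition correlation_free n (T : pdt n) : Prop :=
  forall p : seq bool, valid_path T p ->
  forall i j : 'I_n, i != j ->
    fixed (path_queries T p) (fun x => x i (+) x j) ->
    fixed (path_queries T p) (fun x => x i) /\
    fixed (path_queries T p) (fun x => x j).

Fixpoint leaf_of n (T : pdt n) (x : input n) : seq bool :=
  match T with
  | Leaf => [::]
  | Node Sq tm tp =>
      let b := parity Sq x == -1 in b :: leaf_of (child b tm tp) x
  end.

(* The vector ell of the leaf reached by x: ell_i is the expected value of
   x_i over uniformly random inputs reaching that leaf. *)
Definition leaf_vec n (T : pdt n) (x : input n) (i : 'I_n) : rat :=
  (\sum_(y : input n | leaf_of T y == leaf_of T x) sgn (y i))
  / #|[set y : input n | leaf_of T y == leaf_of T x]|%:R.

Definition leaf_sq_expectation n (T : pdt n) : rat :=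
  (\sum_(x : input n) (\sum_(i < n) leaf_vec T x i) ^+ 2) / (2 ^ n)%:R.

From mathcomp Require Import all_boot all_order all_algebra.
From mathcomp Require Import ring lra.
Set Implicit Arguments. Unset Strict Implicit. Unset Printing Implicit Defensive.
Import Order.TTheory GRing.Theory Num.Theory.
Local Open Scope ring_scope.

(* The leaf vector of x has l_i = x_i when x_i is fixed by the queries on the
   path to the leaf, and l_i = 0 otherwise: a coordinate that is not fixed is
   flipped by some direction d invisible to all queries, so it averages out.
   Descend the tree keeping the sum over inputs of (sum of fixed x_i)^2.  One
   more query S can fix at most one new coordinate i, for if it fixed two, i
   and j, then x_i x_j would already have been fixed and correlation-freeness
   would fix x_i.  Expanding the square, the new term contributes at most 1
   and the cross term (old sum) * x_i vanishes on every class of inputs with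
   the same old answers, again by flipping along d.  Hence each level adds at
   most 1 per input. *)

Lemma sgn_addb a b : sgn (a (+) b) = sgn a * sgn b.
Proof. by case: a; case: b; rewrite /sgn /= ?mulN1r ?opprK ?mul1r ?mulr1. Qed.

Lemma sgn_inj : injective sgn.
Proof. by case; case => // /eqP. Qed.

Lemma sgn_negb b : sgn (~~ b) = - sgn b.
Proof. by case: b; rewrite /sgn /= ?opprK. Qed.

Lemma sgn_sqr b : sgn b ^+ 2 = 1.
Proof. by case: b; rewrite /sgn /= ?sqrrN expr1n. Qed.

Section ParityDecisionTrees.
Variable n : nat.
Implicit Types (x y d : input n) (S : {set 'I_n}) (Q : seq {set 'I_n}).

Definition parityb S x : bool := \big[addb/false]_(i in S) x i.

Lemma parityE S x : parity S x = sgn (parityb S x).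
Proof. by rewrite /parity /parityb (big_morph sgn sgn_addb (erefl (sgn false))). Qed.

Lemma parity_eqN1 S x : (parity S x == -1) = parityb S x.
Proof. by rewrite parityE; case: parityb. Qed.

Definition shift d x : input n := [ffun k => x k (+) d k].

Lemma shiftK d : involutive (shift d).
Proof. by move=> x; apply/ffunP => k; rewrite !ffunE addbK. Qed.

Lemma parityb_shift S d x : parityb S (shift d x) = parityb S x (+) parityb S d.
Proof. by rewrite /parityb -big_split; apply: eq_bigr => i _; rewrite ffunE. Qed.

Definition answers Q x := [seq parityb q x | q <- Q].

Definition answer_invariant (T : Type) Q (f : input n -> T) :=
  forall x y, answers Q x = answers Q y -> f x = f y.

Lemma fixedE Q (f : input n -> bool) : fixed Q f <-> answer_invariant Q f.
Proof.
split=> fQ x y exy; apply: fQ.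
  by move=> q qQ; rewrite !parityE; have /eq_in_map/(_ q qQ) -> := exy.
by apply/eq_in_map => q /exy; rewrite !parityE => /sgn_inj.
Qed.

Lemma answers_rcons Q S x y :
  answers (rcons Q S) x = answers (rcons Q S) y <->
  answers Q x = answers Q y /\ parityb S x = parityb S y.
Proof. by rewrite /answers !map_rcons; split=> [/rcons_inj [-> ->] | [-> ->]]. Qed.

Definition fixedb Q i :=
  [forall x, forall y, (answers Q x == answers Q y) ==> (x i == y i)].

Lemma fixedbP Q i : reflect (answer_invariant Q (fun x => x i)) (fixedb Q i).
Proof.
apply: (iffP forallP) => [fQ x y /eqP exy | fQ x].
  by have /forallP/(_ y) := fQ x; rewrite exy => /eqP.
by apply/forallP => y; apply/implyP => /eqP/fQ ->.
Qed.

Lemma fixedb_rcons Q S i : fixedb Q i -> fixedb (rcons Q S) i.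
Proof. by move=> /fixedbP fQ; apply/fixedbP => x y /answers_rcons[/fQ]. Qed.

Lemma fixedb_nil i : fixedb [::] i = false.
Proof. by apply/fixedbP => /(_ [ffun=> true] [ffun=> false] erefl); rewrite !ffunE. Qed.

Lemma not_fixedb_shift Q i :
  ~~ fixedb Q i -> exists2 d, (forall x, answers Q (shift d x) = answers Q x) & d i.
Proof.
move=> /forallPn[x0] /forallPn[y0]; rewrite negb_imply => /andP[/eqP e0 ne0].
exists (shift x0 y0); last by rewrite ffunE; case: (x0 i) (y0 i) ne0 => [] [].
move=> x; apply/eq_in_map => q qQ /=; rewrite !parityb_shift.
by have /eq_in_map/(_ q qQ) /= -> := e0; rewrite addbb addbF.
Qed.

Lemma sum_sgn_not_fixed Q i (K : pred (input n)) (h : input n -> rat) :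
  ~~ fixedb Q i -> answer_invariant Q K -> answer_invariant Q h ->
  \sum_(x | K x) h x * sgn (x i) = 0.
Proof.
move=> /not_fixedb_shift[d dQ di] KQ hQ.
have : \sum_(x | K x) h x * sgn (x i) = - \sum_(x | K x) h x * sgn (x i).
  rewrite {1}(reindex_inj (can_inj (shiftK d))) -sumrN.
  apply: eq_big => [x | x _]; first by rewrite (KQ _ _ (dQ x)).
  by rewrite (hQ _ _ (dQ x)) ffunE di addbT sgn_negb mulrN.
lra.
Qed.

Lemma new_fixed_flips Q S i x y :
  ~~ fixedb Q i -> fixedb (rcons Q S) i ->
  answers Q x = answers Q y -> parityb S x != parityb S y -> y i = ~~ x i.
Proof.
move=> /not_fixedb_shift[d dQ di] /fixedbP fQS exy nexy.
have flip_i : shift d x i = ~~ x i by rewrite ffunE di addbT.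
have dS : parityb S d.
  apply/negPn/negP => /negbTE dS0.
  have /fQS : answers (rcons Q S) (shift d x) = answers (rcons Q S) x.
    by apply/answers_rcons; rewrite dQ parityb_shift dS0 addbF.
  by rewrite flip_i; case: (x i).
rewrite -flip_i; apply: fQS; apply/answers_rcons; rewrite dQ parityb_shift dS addbT.
by split=> //; move: nexy; case: (parityb S x); case: (parityb S y).
Qed.

Definition correlation_free_queries Q := forall i j : 'I_n, i != j ->
  fixed Q (fun x => x i (+) x j) -> fixed Q (fun x => x i) /\ fixed Q (fun x => x j).

Lemma new_fixed_unique Q S i j : correlation_free_queries Q ->
  fixedb (rcons Q S) i -> ~~ fixedb Q i ->
  fixedb (rcons Q S) j -> ~~ fixedb Q j -> i = j.
Proof.
move=> cfQ fi nfi fj nfj; have [//|ij] := eqVneq i j.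
have xor_fixed : fixed Q (fun x => x i (+) x j).
  apply/fixedE => x y exy.
  have [eS | neS] := eqVneq (parityb S x) (parityb S y).
    have exyS : answers (rcons Q S) x = answers (rcons Q S) y by apply/answers_rcons.
    by rewrite (fixedbP _ _ fi _ _ exyS) (fixedbP _ _ fj _ _ exyS).
  rewrite (new_fixed_flips nfi fi exy neS) (new_fixed_flips nfj fj exy neS).
  by case: (x i); case: (x j).
by have [/fixedE/fixedbP fQi _] := cfQ i j ij xor_fixed; rewrite fQi in nfi.
Qed.

Definition fixed_sum Q x : rat := \sum_(i < n | fixedb Q i) sgn (x i).

Lemma fixed_sum_invariant Q : answer_invariant Q (fixed_sum Q).
Proof. by move=> x y exy; apply: eq_bigr => i /fixedbP fi; rewrite (fi x y exy). Qed.

Lemma fixed_sum_nil x : fixed_sum [::] x = 0.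
Proof. by apply: big_pred0 => i; rewrite fixedb_nil. Qed.

Definition new_fixed_sum Q S x : rat :=
  \sum_(i < n | fixedb (rcons Q S) i && ~~ fixedb Q i) sgn (x i).

Lemma fixed_sum_rcons Q S x :
  fixed_sum (rcons Q S) x = fixed_sum Q x + new_fixed_sum Q S x.
Proof.
rewrite /fixed_sum (bigID (fixedb Q)) /=; congr (_ + _); apply: eq_bigl => i.
by case fi: (fixedb Q i); rewrite ?andbT ?andbF //; apply: fixedb_rcons.
Qed.

Lemma new_fixed_sum_sqr_le1 Q S x :
  correlation_free_queries Q -> new_fixed_sum Q S x ^+ 2 <= 1.
Proof.
move=> cfQ; rewrite /new_fixed_sum.
case: (pickP (fun i => fixedb (rcons Q S) i && ~~ fixedb Q i)) => [i | none].
  move=> /andP[fi nfi]; rewrite (bigD1 i) ?fi ?nfi //= big1 ?addr0 ?sgn_sqr //.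
  move=> j /andP[/andP[fj nfj] ji].
  by rewrite (new_fixed_unique cfQ fj nfj fi nfi) eqxx in ji.
by rewrite big_pred0 // expr0n.
Qed.

Lemma sum_fixed_sum_sqr_rcons Q S (K : pred (input n)) :
  correlation_free_queries Q -> answer_invariant Q K ->
  \sum_(x | K x) fixed_sum (rcons Q S) x ^+ 2 <=
  \sum_(x | K x) (fixed_sum Q x ^+ 2 + 1).
Proof.
move=> cfQ KQ.
have cross : \sum_(x | K x) fixed_sum Q x * new_fixed_sum Q S x = 0.
  under eq_bigr do rewrite mulr_sumr.
  rewrite exchange_big /=; apply: big1 => i /andP[_ nfi].
  exact: sum_sgn_not_fixed nfi KQ (@fixed_sum_invariant Q).
have -> : \sum_(x | K x) fixed_sum (rcons Q S) x ^+ 2 =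
    \sum_(x | K x) (fixed_sum Q x ^+ 2 + new_fixed_sum Q S x ^+ 2) +
    2 * \sum_(x | K x) fixed_sum Q x * new_fixed_sum Q S x.
  rewrite mulr_sumr -big_split /=; apply: eq_bigr => x _.
  by rewrite fixed_sum_rcons; ring.
by rewrite cross mulr0 addr0; apply: ler_sum => x _; rewrite lerD2l new_fixed_sum_sqr_le1.
Qed.

Definition correlation_free_after Q (T : pdt n) :=
  forall p, valid_path T p -> correlation_free_queries (Q ++ path_queries T p).

Lemma sum_fixed_sum_sqr_leaf (T : pdt n) Q (K : pred (input n)) :
  correlation_free_after Q T -> answer_invariant Q K ->
  \sum_(x | K x) fixed_sum (Q ++ path_queries T (leaf_of T x)) x ^+ 2 <=
  \sum_(x | K x) (fixed_sum Q x ^+ 2 + (depth T)%:R).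
Proof.
elim: T Q K => [|S tm IHm tp IHp] Q K cfT KQ /=.
  by apply: ler_sum => x _; rewrite cats0 lerDl.
pose D := maxn (depth tm) (depth tp).
apply: (@le_trans _ _ (\sum_(x | K x) (fixed_sum (rcons Q S) x ^+ 2 + D%:R))).
  rewrite [leLHS](partition_big (parityb S) predT) //.
  rewrite [leRHS](partition_big (parityb S) predT) //=.
  apply: ler_sum => b _.
  have cfb : correlation_free_after (rcons Q S) (child b tm tp).
    by move=> p vp; rewrite cat_rcons; exact: (cfT (b :: p)).
  have Kb : answer_invariant (rcons Q S) (fun x => K x && (parityb S x == b)).
    by move=> x y /answers_rcons[/KQ -> ->].
  rewrite (eq_bigr (fun x => fixed_sum (rcons Q S ++ path_queries (child b tm tp)
                                 (leaf_of (child b tm tp) x)) x ^+ 2)) => [|x]; last first.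
    by move=> /andP[_ /eqP eb]; rewrite parity_eqN1 eb cat_rcons.
  apply: le_trans (_ : _ <= \sum_(x | K x && (parityb S x == b))
     (fixed_sum (rcons Q S) x ^+ 2 + (depth (child b tm tp))%:R)) _.
    by move: cfb Kb; case: b => cfb Kb; [exact: IHm | exact: IHp].
  apply: ler_sum => x _; rewrite lerD2l ler_nat.
  by case: b {cfb Kb}; rewrite ?leq_maxl ?leq_maxr.
have cfQ : correlation_free_queries Q by have := cfT [::] erefl; rewrite cats0.
have le_rcons := sum_fixed_sum_sqr_rcons S cfQ KQ.
rewrite -/D -[D.+1]addn1 natrD.
rewrite [leRHS](eq_bigr (fun x => fixed_sum Q x ^+ 2 + 1 + D%:R)) => [|x _]; last first.
  by rewrite addrA addrAC.
by rewrite [leLHS]big_split [leRHS]big_split lerD2r.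
Qed.

Lemma leaf_of_eqE (T : pdt n) x y :
  (leaf_of T y == leaf_of T x) =
  (answers (path_queries T (leaf_of T x)) y == answers (path_queries T (leaf_of T x)) x).
Proof.
elim: T => [|S tm IHm tp IHp] //=; rewrite /answers /= !parity_eqN1 !eqseq_cons.
by have [->|] //= := eqVneq (parityb S y) (parityb S x); case: (parityb S x).
Qed.

Lemma leaf_vecE (T : pdt n) x i :
  leaf_vec T x i = if fixedb (path_queries T (leaf_of T x)) i then sgn (x i) else 0.
Proof.
rewrite /leaf_vec; set Q := path_queries T (leaf_of T x).
set C := [set y | leaf_of T y == leaf_of T x].
have CQ y : (y \in C) = (answers Q y == answers Q x) by rewrite inE leaf_of_eqE.
rewrite (eq_bigl (fun y => y \in C)) => [|y]; last by rewrite inE.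
have [fi | nfi] := ifPn.
  rewrite (eq_bigr (fun=> sgn (x i))) => [|y]; last first.
    by rewrite CQ => /eqP/(fixedbP _ _ fi) ->.
  rewrite sumr_const -[_ *+ #|C|]mulr_natr mulfK // pnatr_eq0 -lt0n card_gt0.
  by apply/set0Pn; exists x; rewrite CQ.
rewrite (eq_bigr (fun y => 1 * sgn (y i))) => [|y _]; last by rewrite mul1r.
by rewrite (sum_sgn_not_fixed nfi) ?mul0r // => y z eyz; rewrite ?CQ ?eyz.
Qed.

Lemma sum_leaf_vec (T : pdt n) x :
  \sum_(i < n) leaf_vec T x i = fixed_sum (path_queries T (leaf_of T x)) x.
Proof.
by rewrite /fixed_sum [RHS]big_mkcond; apply: eq_bigr => i _; rewrite leaf_vecE.
Qed.

End ParityDecisionTrees.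

Theorem proposition1 (n : nat) (T : pdt n) :
  correlation_free T -> leaf_sq_expectation T <= (depth T)%:R.
Proof.
move=> cfT; rewrite /leaf_sq_expectation ler_pdivrMr ?ltr0n ?expn_gt0 //.
have := sum_fixed_sum_sqr_leaf (Q := [::]) (K := predT) cfT (fun _ _ _ => erefl).
under [leRHS]eq_bigr do rewrite fixed_sum_nil expr0n add0r.
rewrite sumr_const card_ffun card_bool card_ord mulr_natr => le_depth.
under eq_bigr do rewrite sum_leaf_vec.
exact: le_depth.
Qed.
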